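(* Let $m\ge 2$ and let $M=(\{0,\dots,m-1\},\{a,b,c,d\},\delta_M,0,\{0\})$ be the DFA with $\delta_M(0,a)=m-1$ and $\delta_M(i,a)=i-1$ for $1\le i\le m-1$; $\delta_M(0,b)=1$ and $\delta_M(i,b)=i$ for $1\le i\le m-1$; $\delta_M(0,c)=1$, $\delta_M(1,c)=0$, and $\delta_M(j,c)=j$ for $2\le j\le m-1$; $\delta_M(i,d)=i$ for all $i$. Then the minimal complete DFA accepting $L(M)^R$ has exactly $2^m$ states.
   Context: For a language $L$, $L^R=\{w^R : w\in L\}$ where $w^R$ is the reversal of the word $w$. DFAs are complete deterministic finite automata $(Q,\Sigma,\delta,s,F)$. *)

From HB Require Import structures.
From mathcomp Require Import all_boot.
Set Implicit Arguments. Unset Strict Implicit. Unset Printing Implicit Defensive.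

Record dfa (Sigma : finType) := Dfa {
  state : finType;
  delta : state -> Sigma -> state;
  start : state;
  final : pred state }.

Definition delta_star (Sigma : finType) (A : dfa Sigma) (q : state A) (w : seq Sigma) : state A :=
  foldl (@delta Sigma A) q w.

Definition lang (Sigma : finType) (A : dfa Sigma) : pred (seq Sigma) :=
  fun w => @final Sigma A (@delta_star Sigma A (@start Sigma A) w).

Definition rev_lang (Sigma : Type) (L : pred (seq Sigma)) : pred (seq Sigma) :=
  fun w => L (rev w).

Definition min_dfa_states (Sigma : finType) (L : pred (seq Sigma)) (n : nat) : Prop :=
  (exists A : dfa Sigma, #|state A| = n /\ forall w, lang A w = L w) /\
  (forall A : dfa Sigma, (forall w, lang A w = L w) -> n <= #|state A|).

Inductive sym := sa | sb | sc | sd.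

Definition sym_to_ord (x : sym) : 'I_4 :=
  match x with sa => inord 0 | sb => inord 1 | sc => inord 2 | sd => inord 3 end.
Definition ord_to_sym (i : 'I_4) : sym :=
  match val i with 0 => sa | 1 => sb | 2 => sc | _ => sd end.
Lemma sym_to_ordK : cancel sym_to_ord ord_to_sym.
Proof. by case; rewrite /ord_to_sym /= inordK. Qed.

HB.instance Definition _ := Finite.copy sym (can_type sym_to_ordK).

Definition M_step (m : nat) (i : nat) (x : sym) : nat :=
  match x with
  | sa => if i == 0 then m.-1 else i.-1
  | sb => if i == 0 then 1 else i
  | sc => if i == 0 then 1 else if i == 1 then 0 else i
  | sd => i
  end.

Definition M_delta (n : nat) (i : 'I_n.+2) (x : sym) : 'I_n.+2 :=
  insubd i (M_step n.+2 (val i) x).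

Definition M_dfa (n : nat) : dfa sym :=
  @Dfa sym 'I_n.+2 (@M_delta n) ord0 (pred1 ord0).

(** Brzozowski's reversal construction accepts L(A)^R by the subset automaton
    on the preimages S |-> {q | delta q x \in S}.  It is minimal as soon as A
    is accessible (distinct sets of states then have distinct residuals) and
    every set of states is reachable.  For M, [a] rotates the states, [c]
    swaps 0 and 1, hence conjugates of [c] swap any two neighbours, and [b]
    merges 0 into 1; preimages under these maps build every set from {0}. *)

From mathcomp Require Import all_boot all_algebra perm.
Set Implicit Arguments. Unset Strict Implicit. Unset Printing Implicit Defensive.
Import GRing.Theory.

Lemma card_sets (T : finType) : #|{set T}| = 2 ^ #|T|.
Proof. by have := card_powerset [set: T]; rewrite powersetT !cardsT. Qed.

Lemma delta_star_cat (Sigma : finType) (A : dfa Sigma) (q : state A) u v :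
  delta_star q (u ++ v) = delta_star (delta_star q u) v.
Proof. exact: foldl_cat. Qed.

Lemma card_le_states_of_residuals (Sigma : finType) (A : dfa Sigma)
    (L : pred (seq Sigma)) (I : finType) (w : I -> seq Sigma) :
  (forall u, lang A u = L u) ->
  (forall i j, (forall u, L (w i ++ u) = L (w j ++ u)) -> i = j) ->
  #|I| <= #|state A|.
Proof.
move=> langA distinct_w.
pose f i := delta_star (start A) (w i).
suff inj_f : injective f by rewrite -(card_imset _ inj_f) max_card.
move=> i j fij; apply: distinct_w => u.
by rewrite -!langA /lang !delta_star_cat -/(f i) -/(f j) fij.
Qed.

Section Reversal.
Variables (Sigma : finType) (A : dfa Sigma).

Definition rev_dfa : dfa Sigma :=
  @Dfa Sigma {set state A} (fun S x => [set q | delta q x \in S])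
    [set q : state A | final q] (fun S => start A \in S).

Lemma rev_dfa_star (S : {set state A}) w :
  delta_star (S : state rev_dfa) w = [set q | delta_star q (rev w) \in S].
Proof.
elim: w S => [|x w IHw] S; first by apply/setP => q; rewrite inE.
by rewrite [LHS]IHw; apply/setP => q; rewrite !inE rev_cons -cats1 delta_star_cat.
Qed.

Definition rev_reached w : {set state A} := delta_star (start rev_dfa) w.

Lemma rev_reachedE w : rev_reached w = [set q | final (delta_star q (rev w))].
Proof. by rewrite /rev_reached rev_dfa_star; apply/setP => q; rewrite !inE. Qed.

Lemma rev_lang_cat w u :
  rev_lang (lang A) (w ++ u) = (delta_star (start A) (rev u) \in rev_reached w).
Proof. by rewrite rev_reachedE inE /rev_lang /lang rev_cat delta_star_cat. Qed.

Lemma lang_rev_dfa w : lang rev_dfa w = rev_lang (lang A) w.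
Proof. by rewrite -[w]cats0 rev_lang_cat cats0 /lang. Qed.

Definition rev_reachable (S : {set state A}) := exists w, rev_reached w = S.

Definition word_induced (f : state A -> state A) :=
  exists u, forall q, delta_star q u = f q.

Lemma word_induced_delta x : word_induced (fun q => delta q x).
Proof. by exists [:: x]. Qed.

Lemma rev_reachable_preimset f S :
  word_induced f -> rev_reachable S -> rev_reachable (f @^-1: S).
Proof.
move=> [u fu] [w <-]; exists (w ++ rev u); apply/setP => q.
by rewrite !inE !rev_reachedE !inE rev_cat revK delta_star_cat fu.
Qed.

Theorem min_dfa_states_rev_lang :
  (forall q : state A, exists u, delta_star (start A) u = q) ->
  (forall S, rev_reachable S) ->
  min_dfa_states (rev_lang (lang A)) (2 ^ #|state A|).
Proof.
move=> accessible reachable; split.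
  by exists rev_dfa; split; [exact: card_sets | exact: lang_rev_dfa].
move=> B accB.
have word_of S : exists w, rev_reached w == S.
  by have [w <-] := reachable S; exists w.
pose w S := xchoose (word_of S).
have wE S : rev_reached (w S) = S by apply/eqP/(xchooseP (word_of S)).
rewrite -card_sets; apply: (card_le_states_of_residuals (w := w) accB).
move=> S T eq_res; apply/setP => q; have [u <-] := accessible q.
by rewrite -(wE S) -(wE T) -(revK u) -!rev_lang_cat eq_res.
Qed.

End Reversal.

Section Automaton_M.
Variable n : nat.
Local Notation Q := 'I_n.+2.
Local Notation M := (M_dfa n).
Local Open Scope ring_scope.

Lemma M_delta_a (q : Q) : M_delta q sa = q - 1.
Proof.
apply: val_inj; rewrite /M_delta val_insubd /= (modn_small (isT : 1 < n.+2)%N).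
rewrite subSS subn0; case: q => [[|i] lt_i] /=.
  by rewrite ltnSn add0n !modn_small.
by rewrite (ltnW lt_i) (modn_small (ltnSn _)) addSnnS modnDr modn_small // ltnW.
Qed.

Lemma M_delta_b (q : Q) : M_delta q sb = if q == 0 then 1 else q.
Proof. by apply: val_inj; rewrite /M_delta val_insubd; case: q => [[|i] lt_i] //=; rewrite lt_i. Qed.

Lemma M_delta_c (q : Q) : M_delta q sc = tperm 0 1 q.
Proof.
apply: val_inj; rewrite /M_delta val_insubd.
case: tpermP => [->|->|]; rewrite ?insubdK //=.
case: q => [[|[|i]] lt_i] /= neq0 neq1; last by rewrite if_same.
  by case: neq0; exact: val_inj.
by case: neq1; apply: val_inj; rewrite /= modn_small.
Qed.

Lemma M_delta_star_nseq_a k (q : Q) : delta_star (q : state M) (nseq k sa) = q - k%:R.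
Proof.
elim: k q => [|k IHk] q; first by rewrite subr0.
apply: etrans (IHk (M_delta q sa)) _.
by rewrite M_delta_a mulrSr opprD addrA addrAC.
Qed.

Lemma M_accessible (q : state M) : exists u, delta_star (start M) u = q.
Proof. by exists (nseq (val (- q)) sa); rewrite M_delta_star_nseq_a natr_Zp sub0r opprK. Qed.

Lemma word_induced_addr (t : Q) : word_induced (fun q : state M => q + t).
Proof. by exists (nseq (val (- t)) sa) => q; rewrite M_delta_star_nseq_a natr_Zp opprK. Qed.

(* [c] conjugated by the rotation taking [j - 1] to 0 *)
Lemma word_induced_tperm_pred (j : Q) :
  word_induced (fun q : state M => tperm (j - 1) j q).
Proof.
have [u rot_u] := word_induced_addr (1 - j).
have [v rot_v] := word_induced_addr (j - 1).
exists (u ++ sc :: v) => q; rewrite delta_star_cat rot_u /= rot_v M_delta_c.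
have e0 : j - 1 + (1 - j) = 0 by rewrite addrC addrA subrK subrr.
have e1 : j + (1 - j) = 1 by rewrite addrC subrK.
have := inj_tperm (j - 1) j q (addIr (1 - j)); rewrite e0 e1 => <-.
by rewrite -(opprB 1 j) addrK.
Qed.

Local Notation reachable := (@rev_reachable _ M).

Lemma val_pred_ord (j : Q) : j != 0 -> (val (j - 1)).+1 = val j.
Proof.
by rewrite -M_delta_a /M_delta val_insubd; case: j => [[|i] lt_i] //= _; rewrite ltnW.
Qed.

Lemma rev_reachable_set1_zero : reachable [set 0].
Proof. by exists [::]; apply/setP => q; rewrite !inE. Qed.

Lemma rev_reachable_set0 : reachable set0.
Proof.
have := rev_reachable_preimset (word_induced_delta M sb) rev_reachable_set1_zero.
congr reachable; apply/setP => q; rewrite !inE /= M_delta_b.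
by case: (eqVneq q 0) => [_|/negbTE //]; exact/negbTE/oner_neq0.
Qed.

(* X is the preimage of X :\ 0 under [b]. *)
Lemma rev_reachable_mem01 (X : {set Q}) :
  0 \in X -> 1 \in X -> reachable (X :\ 0) -> reachable X.
Proof.
move=> X0 X1 /(rev_reachable_preimset (word_induced_delta M sb)).
congr reachable; apply/setP => q; rewrite !inE /= M_delta_b.
by case: (eqVneq q 0) => [->|->]; rewrite ?oner_neq0 ?X0 ?X1.
Qed.

Section SizeStep.
Variable k : nat.
Hypothesis reachable_card : forall T : {set Q}, #|T| = k -> reachable T.

(* Swapping [j - 1] and [j] moves the least nonzero element of X down to 1. *)
Lemma rev_reachable_mem0_mem d (X : {set Q}) (j : Q) :
  (val j < d)%N -> 0 \in X -> j \in X -> j != 0 -> #|X| = k.+1 -> reachable X.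
Proof.
elim: d X j => // d IHd X j lt_j_d X0 Xj j_neq0 cardX.
have [j_eq1|j_neq1] := eqVneq j 1.
  apply: rev_reachable_mem01; rewrite -?j_eq1 //; apply: reachable_card.
  by move: cardX; rewrite (cardsD1 0) X0 => -[].
have i_neq0 : j - 1 != 0 by rewrite subr_eq0.
pose Y := tperm (j - 1) j @^-1: X.
have reachable_Y : reachable Y.
  apply: (IHd Y (j - 1)) => //; rewrite ?inE ?tpermL //.
  - by rewrite -ltnS val_pred_ord.
  - by rewrite tpermD // eq_sym.
  - by rewrite card_preimset //; exact: perm_inj.
have := rev_reachable_preimset (word_induced_tperm_pred j) reachable_Y.
by congr reachable; apply/setP => q; rewrite !inE tpermK.
Qed.

Lemma rev_reachable_mem0 (X : {set Q}) : 0 \in X -> #|X| = k.+1 -> reachable X.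
Proof.
move=> X0 cardX; have [X0_eq0|[j]] := set_0Vmem (X :\ 0).
  by rewrite -(setD1K X0) X0_eq0 setU0; exact: rev_reachable_set1_zero.
by rewrite !inE => /andP[j_neq0 Xj]; exact: (@rev_reachable_mem0_mem (val j).+1 X j).
Qed.
End SizeStep.

Lemma rev_reachable_M (S : {set Q}) : reachable S.
Proof.
move: {2}#|S| (erefl #|S|) => k; elim: k S => [|k IHk] S cardS.
  by rewrite (cards0_eq cardS); exact: rev_reachable_set0.
have [j Sj] : exists j, j \in S by apply/card_gt0P; rewrite cardS.
pose X := (fun q => q + j) @^-1: S.
have reachable_X : reachable X.
  apply: (rev_reachable_mem0 IHk); first by rewrite inE add0r.
  by rewrite card_preimset // => p q /addIr.
have := rev_reachable_preimset (word_induced_addr (- j)) reachable_X.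
by congr reachable; apply/setP => q; rewrite !inE subrK.
Qed.

End Automaton_M.

Theorem mainTheorem7 (m : nat) (hm : 2 <= m) :
  min_dfa_states (rev_lang (lang (M_dfa (m - 2)))) (2 ^ m).
Proof.
case: m hm => [|[|n]] // _; rewrite subn2 /=.
have := min_dfa_states_rev_lang (@M_accessible n) (@rev_reachable_M n).
by rewrite card_ord.
Qed.
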